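(* Let $F:[0,\infty)\to\mathbb{R}$ be $C^{1,1}$ with $F'(0)=0$ and let $\Sigma=\{(w,F(|w|)):w\in\mathbb{R}^2\}\subset\mathbb{R}^3$. Then every compact subset of $(\Sigma,d_{\mathbb{H}})$ bi-Lipschitz embeds in some Euclidean space $\mathbb{R}^n$.
   Context: For $w=(x,y,z)$, $w'=(x',y',z')$, $d_{\mathbb{H}}(w,w')=|x-x'|+|y-y'|+|z-z'+\tfrac12(xy'-x'y)|^{1/2}$. $(A,d_{\mathbb{H}})$ bi-Lipschitz embeds in $\mathbb{R}^n$ if there are $L\ge1$ and $f:A\to\mathbb{R}^n$ with $L^{-1}d_{\mathbb{H}}(a,b)\le|f(a)-f(b)|\le Ld_{\mathbb{H}}(a,b)$ for all $a,b\in A$. *)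

From Stdlib Require Import Reals Lra List.
Open Scope R_scope.

(* Points of R^3 = Heisenberg group in exponential coordinates. *)
Definition point : Type := (R * R * R)%type.

Definition dH (w w' : point) : R :=
  let '(x, y, z) := w in
  let '(x', y', z') := w' in
  Rabs (x - x') + Rabs (y - y')
  + sqrt (Rabs (z - z' + / 2 * (x * y' - x' * y))).

Definition has_deriv_nonneg (F : R -> R) (t d : R) : Prop :=
  forall eps, 0 < eps -> exists delta, 0 < delta /\
    forall s, 0 <= s -> Rabs (s - t) < delta ->
      Rabs (F s - F t - d * (s - t)) <= eps * Rabs (s - t).

(* F : [0,oo) -> R is C^{1,1}: differentiable on [0,oo) (one-sided at 0)
   with Lipschitz derivative F'. Only values of F on [0,oo) matter. *)
Definition C11_nonneg (F F' : R -> R) : Prop :=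
  (forall t, 0 <= t -> has_deriv_nonneg F t (F' t)) /\
  exists K, 0 <= K /\
    forall s t, 0 <= s -> 0 <= t -> Rabs (F' s - F' t) <= K * Rabs (s - t).

Definition Sigma (F : R -> R) (p : point) : Prop :=
  let '(x, y, z) := p in z = F (sqrt (x * x + y * y)).

Definition dH_open (U : point -> Prop) : Prop :=
  forall p, U p -> exists r, 0 < r /\ forall q, dH p q < r -> U q.

Definition dH_compact (A : point -> Prop) : Prop :=
  forall (I : Type) (U : I -> point -> Prop),
    (forall i, dH_open (U i)) ->
    (forall a, A a -> exists i, U i a) ->
    exists l : list I, forall a, A a -> exists i, In i l /\ U i a.

(* Euclidean distance in R^n, vectors represented as nat -> R
   (only coordinates 0..n-1 are used). *)
Fixpoint sumsq (n : nat) (u v : nat -> R) : R :=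
  match n with
  | O => 0
  | S m => sumsq m u v + (u m - v m) ^ 2
  end.

Definition euclid_dist (n : nat) (u v : nat -> R) : R := sqrt (sumsq n u v).

Definition biLip_embeds (A : point -> Prop) (n : nat) : Prop :=
  exists (L : R) (f : point -> nat -> R), 1 <= L /\
    forall a b, A a -> A b ->
      / L * dH a b <= euclid_dist n (f a) (f b) /\
      euclid_dist n (f a) (f b) <= L * dH a b.

(* Write [w = r e^{iθ}] and let [ω] be the direction [e^{iθ}] rotated by
   [G(r) = ∫_1^r 2 F'(s) / s^2 ds]. For two points of Σ with [r' <= r], the vertical
   part of [d_H] is comparable to [r'^2 |ω - ω'|] up to [O(|w - w'|^2)]; this is where
   [F ∈ C^{1,1}] and [F'(0) = 0] enter. Hence [d_H ≍ |w - w'| + r' |ω - ω'|^{1/2}] on Σ.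
   The snowflaked circle [(S^1, |.|^{1/2})] embeds bi-Lipschitz in [R^32] (Assouad): map
   [ω] to the 16 sums over [k ≡ b (mod 16)] of [2^{-k/2} ω^{2^k}], in which the term
   with [|ω^{2^k} - ω'^{2^k}| ≍ 1] dominates. Scaling by [r] and adding [w] embeds all
   of Σ in [R^34]. *)

From Stdlib Require Import Reals Lra Lia.
From Coquelicot Require Import Coquelicot.
Open Scope R_scope.

(** * Series dominated by a geometric peak *)

Definition nat_dist (i j : nat) : nat := (i - j + (j - i))%nat.

Fixpoint sum_lt (a : nat -> R) (m : nat) : R :=
  match m with O => 0 | S m' => sum_lt a m' + a m' end.

Lemma sum_lt_sum_f_R0 (a : nat -> R) (n : nat) : sum_lt a (S n) = sum_f_R0 a n.
Proof. induction n as [|n IH]; simpl in *; [lra|]. rewrite <- IH. reflexivity. Qed.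

Lemma pow_le_antimono (x : R) (m n : nat) : 0 <= x <= 1 -> (m <= n)%nat -> x ^ n <= x ^ m.
Proof.
  intros Hx Hmn. replace n with (m + (n - m))%nat by lia. rewrite pow_add.
  assert (x ^ (n - m) <= 1) by (rewrite <- (pow1 (n - m)); apply pow_incr; lra).
  pose proof (pow_le x m ltac:(lra)). nra.
Qed.

Section PeakedSeries.
Variables (a : nat -> R) (i0 : nat) (A q : R).
Hypotheses (Hq : 0 <= q < 1) (HA : 0 <= A).

Lemma sum_lt_peaked_le :
  (forall i, (i < i0)%nat -> Rabs (a i) <= A * q ^ (i0 - i)) ->
  forall m, (m <= i0)%nat -> Rabs (sum_lt a m) <= A * q ^ (i0 - m) * (q / (1 - q)).
Proof.
  intros Ha m. induction m as [|m IH]; intros Hm; simpl.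
  - rewrite Rabs_R0, Nat.sub_0_r. pose proof (pow_le q i0 ltac:(lra)).
    apply Rmult_le_pos; [nra|]. apply Rmult_le_pos; [lra|]. apply Rlt_le, Rinv_0_lt_compat; lra.
  - specialize (IH ltac:(lia)). specialize (Ha m ltac:(lia)).
    replace (i0 - m)%nat with (S (i0 - S m)) in IH, Ha by lia. simpl in IH, Ha.
    pose proof (pow_le q (i0 - S m) ltac:(lra)).
    set (t := q ^ (i0 - S m)) in *.
    assert (A * (q * t) * (q / (1 - q)) + A * (q * t) = A * t * (q / (1 - q))) by (field; lra).
    pose proof (Rabs_triang (sum_lt a m) (a m)). lra.
Qed.

Lemma peaked_series_sub_le :
  (forall i, i <> i0 -> Rabs (a i) <= A * q ^ nat_dist i i0) ->
  ex_series a /\ Rabs (Series a - a i0) <= 2 * A * q / (1 - q).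
Proof.
  intros Ha.
  set (tail := fun k => a (S i0 + k)%nat).
  set (geom := fun k => A * q * q ^ k).
  assert (Htail : forall k, Rabs (tail k) <= geom k).
  { intro k. unfold tail, geom. eapply Rle_trans; [apply Ha; lia|]. unfold nat_dist.
    replace (S i0 + k - i0 + (i0 - (S i0 + k)))%nat with (S k) by lia. simpl. lra. }
  assert (Hgeom : ex_series geom).
  { apply (ex_series_scal_l (V := R_NormedModule)), ex_series_geom. rewrite Rabs_pos_eq; lra. }
  assert (Hatail : ex_series (fun k => Rabs (tail k))).
  { apply (ex_series_le (V := R_CompleteNormedModule)) with geom; [|exact Hgeom].
    intro k. change (norm (Rabs (tail k))) with (Rabs (Rabs (tail k))). rewrite Rabs_Rabsolu. auto. }
  assert (Hex : ex_series a).
  { apply (ex_series_incr_n a (S i0)), ex_series_Rabs, Hatail. }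
  split; [exact Hex|].
  assert (Hhead : Rabs (sum_lt a i0) <= A * q / (1 - q)).
  { eapply Rle_trans; [apply sum_lt_peaked_le; [|lia]|].
    - intros i Hi. eapply Rle_trans; [apply Ha; lia|]. unfold nat_dist.
      replace (i - i0 + (i0 - i))%nat with (i0 - i)%nat by lia. lra.
    - rewrite Nat.sub_diag. right. simpl. field. lra. }
  assert (Hrest : Rabs (Series tail) <= A * q / (1 - q)).
  { eapply Rle_trans; [apply Series_Rabs, Hatail|].
    eapply Rle_trans; [apply (Series_le _ geom); [|exact Hgeom]|].
    - intro k; split; [apply Rabs_pos | apply Htail].
    - unfold geom. rewrite Series_scal_l, Series_geom by (rewrite Rabs_pos_eq; lra).
      right. field. lra. }
  rewrite (Series_incr_n a (S i0)), <- sum_lt_sum_f_R0 by (auto; lia).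
  simpl pred; simpl sum_lt; fold tail.
  replace (sum_lt a i0 + a i0 + Series tail - a i0) with (sum_lt a i0 + Series tail) by ring.
  pose proof (Rabs_triang (sum_lt a i0) (Series tail)).
  replace (2 * A * q / (1 - q)) with (A * q / (1 - q) + A * q / (1 - q)) by (field; lra). lra.
Qed.

Lemma peaked_series_le :
  (forall i, Rabs (a i) <= A * q ^ nat_dist i i0) ->
  ex_series a /\ Rabs (Series a) <= 2 * A / (1 - q).
Proof.
  intros Ha. destruct peaked_series_sub_le as [Hex Hsub]; [intros i _; apply Ha|].
  split; [exact Hex|].
  specialize (Ha i0). unfold nat_dist in Ha. rewrite Nat.sub_diag in Ha. simpl in Ha.
  pose proof (Rabs_triang (Series a - a i0) (a i0)) as Htri.
  replace (Series a - a i0 + a i0) with (Series a) in Htri by ring.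
  assert (2 * A / (1 - q) = 2 * A + 2 * A * q / (1 - q)) by (field; lra). lra.
Qed.

End PeakedSeries.

(** * Chords of iterated squares on the unit circle *)

Definition sqnorm (u : R * R) : R := fst u * fst u + snd u * snd u.
Definition sqdist (u v : R * R) : R :=
  (fst u - fst v) * (fst u - fst v) + (snd u - snd v) * (snd u - snd v).

Definition csq (u : R * R) : R * R := (fst u * fst u - snd u * snd u, 2 * fst u * snd u).

Fixpoint csq_iter (k : nat) (u : R * R) : R * R :=
  match k with O => u | S k' => csq (csq_iter k' u) end.

Definition chord (k : nat) (u v : R * R) : R := sqrt (sqdist (csq_iter k u) (csq_iter k v)).

Lemma sqdist_ge0 u v : 0 <= sqdist u v.
Proof.
  unfold sqdist. pose proof (Rle_0_sqr (fst u - fst v)). pose proof (Rle_0_sqr (snd u - snd v)).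
  unfold Rsqr in *. lra.
Qed.

Lemma sqdist_unit_le4 u v : sqnorm u = 1 -> sqnorm v = 1 -> sqdist u v <= 4.
Proof.
  unfold sqnorm, sqdist. intros Hu Hv.
  pose proof (Rle_0_sqr (fst u + fst v)). pose proof (Rle_0_sqr (snd u + snd v)).
  unfold Rsqr in *. nra.
Qed.

Lemma sqnorm_csq u : sqnorm (csq u) = sqnorm u * sqnorm u.
Proof. unfold sqnorm, csq; simpl; ring. Qed.

Lemma sqdist_csq u v :
  sqdist (csq u) (csq v) = sqdist u v * (2 * sqnorm u + 2 * sqnorm v - sqdist u v).
Proof. unfold sqdist, sqnorm, csq; simpl; ring. Qed.

Lemma sqnorm_csq_iter k u : sqnorm u = 1 -> sqnorm (csq_iter k u) = 1.
Proof. intro Hu; induction k as [|k IH]; simpl; [exact Hu|]. rewrite sqnorm_csq, IH; ring. Qed.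

Section Chords.
Variables u v : R * R.
Hypotheses (Hu : sqnorm u = 1) (Hv : sqnorm v = 1).

Lemma chord_ge0 k : 0 <= chord k u v.
Proof. apply sqrt_pos. Qed.

Lemma chord_le2 k : chord k u v <= 2.
Proof.
  unfold chord. rewrite <- (sqrt_square 2) by lra. apply sqrt_le_1_alt.
  pose proof (sqdist_unit_le4 _ _ (sqnorm_csq_iter k u Hu) (sqnorm_csq_iter k v Hv)). lra.
Qed.

Lemma chord_S_sq k :
  chord (S k) u v * chord (S k) u v = chord k u v * chord k u v * (4 - chord k u v * chord k u v).
Proof.
  unfold chord. rewrite !sqrt_sqrt by apply sqdist_ge0. simpl.
  rewrite sqdist_csq, !sqnorm_csq_iter by assumption. ring.
Qed.

Lemma chord_le_pow2 k : chord k u v <= 2 ^ k * chord 0 u v.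
Proof.
  induction k as [|k IH]; simpl; [lra|].
  pose proof (chord_S_sq k). pose proof (chord_ge0 k). pose proof (chord_ge0 (S k)).
  assert (chord (S k) u v <= 2 * chord k u v) by nra. nra.
Qed.

Lemma chord_S_ge k : 2 * chord k u v - chord k u v ^ 3 / 2 <= chord (S k) u v.
Proof.
  pose proof (chord_S_sq k). pose proof (chord_ge0 k). pose proof (chord_ge0 (S k)).
  pose proof (chord_le2 k).
  set (c := chord k u v) in *. set (c' := chord (S k) u v) in *.
  destruct (Rle_dec (2 * c - c ^ 3 / 2) 0) as [Hn|Hp]; [lra|].
  assert ((2 * c - c ^ 3 / 2) * (2 * c - c ^ 3 / 2) <= c' * c') by nra. nra.
Qed.

Lemma chord_ge_pow2 k : 2 ^ k * chord 0 u v <= / 2 ->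
  2 ^ k * chord 0 u v * (1 - (2 ^ k * chord 0 u v) ^ 2 / 12) <= chord k u v.
Proof.
  induction k as [|k IH]; intros Hk.
  - simpl in *. pose proof (chord_ge0 0). nra.
  - simpl in Hk |- *. pose proof (chord_ge0 0). pose proof (pow_lt 2 k ltac:(lra)).
    specialize (IH ltac:(nra)).
    pose proof (chord_le_pow2 k). pose proof (chord_S_ge k). pose proof (chord_ge0 k).
    set (y := 2 ^ k * chord 0 u v) in *. set (c := chord k u v) in *.
    replace (2 * 2 ^ k * chord 0 u v) with (2 * y) by (unfold y; ring).
    assert (c ^ 3 <= y ^ 3) by (apply pow_incr; lra).
    assert (0 <= y) by (unfold y; nra).
    nra.
Qed.

End Chords.

(** * The snowflake embedding of the circle *)

Definition inv_sqrt2 : R := / sqrt 2.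

Lemma inv_sqrt2_sq : inv_sqrt2 * inv_sqrt2 = / 2.
Proof. unfold inv_sqrt2. rewrite <- Rinv_mult, sqrt_sqrt; lra. Qed.

Lemma inv_sqrt2_pos : 0 < inv_sqrt2.
Proof. apply Rinv_0_lt_compat, sqrt_lt_R0; lra. Qed.

Lemma inv_sqrt2_le1 : inv_sqrt2 <= 1.
Proof. pose proof inv_sqrt2_sq. pose proof inv_sqrt2_pos. nra. Qed.

Lemma inv_sqrt2_pow_pos k : 0 < inv_sqrt2 ^ k.
Proof. apply pow_lt, inv_sqrt2_pos. Qed.

Lemma inv_sqrt2_pow16 : inv_sqrt2 ^ 16 = / 256.
Proof.
  change 16%nat with (2 * 8)%nat. rewrite pow_mult. simpl pow.
  rewrite Rmult_1_r, inv_sqrt2_sq. field.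
Qed.

Lemma inv_sqrt2_pow_sq k : inv_sqrt2 ^ k * inv_sqrt2 ^ k * 2 ^ k = 1.
Proof.
  rewrite <- !Rpow_mult_distr, inv_sqrt2_sq. replace (/ 2 * 2) with 1 by field. apply pow1.
Qed.

Lemma inv_sqrt2_pow_antimono m n : (m <= n)%nat -> inv_sqrt2 ^ n <= inv_sqrt2 ^ m.
Proof. apply pow_le_antimono. pose proof inv_sqrt2_pos. pose proof inv_sqrt2_le1. lra. Qed.

Lemma inv_sqrt2_pow_between (c : R) (J : nat) : 0 <= c -> / 4 <= 2 ^ J * c <= 4 ->
  sqrt c / 2 <= inv_sqrt2 ^ J <= 2 * sqrt c.
Proof.
  intros Hc HJ. pose proof (inv_sqrt2_pow_sq J) as E. pose proof (inv_sqrt2_pow_pos J).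
  set (s := inv_sqrt2 ^ J) in *.
  assert (Hs : s * s * (2 ^ J * c) = c) by (rewrite <- Rmult_assoc, E; ring).
  split.
  - assert (sqrt c <= 2 * s); [|lra].
    rewrite <- (sqrt_square (2 * s)) by lra. apply sqrt_le_1_alt. nra.
  - rewrite <- (sqrt_square s), <- (sqrt_square 2), <- sqrt_mult by lra.
    apply sqrt_le_1_alt. nra.
Qed.

Lemma pow2_archimed (c : R) : 0 < c <= / 2 -> exists J, 2 ^ J * c <= / 2 < 2 ^ S J * c.
Proof.
  intros Hc. destruct (INR_archimed c 1 ltac:(lra)) as [n Hn].
  assert (H : / 2 < 2 ^ n * c).
  { assert (INR n <= 2 ^ n).
    { clear. induction n as [|n IH]; [simpl; lra|]. rewrite S_INR. simpl pow.
      pose proof (pow_R1_Rle 2 n ltac:(lra)). lra. }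
    nra. }
  clear Hn. induction n as [|n IH]; [simpl in H; lra|].
  destruct (Rlt_dec (/ 2) (2 ^ n * c)) as [h|h]; [exact (IH h)|].
  exists n. lra.
Qed.

Section Scale.
Variables u v : R * R.
Hypotheses (Hu : sqnorm u = 1) (Hv : sqnorm v = 1).

Lemma chord_scale_exists : 0 < chord 0 u v ->
  exists J, / 4 <= 2 ^ J * chord 0 u v <= 2 /\ 47 / 192 <= chord J u v.
Proof.
  intros Hc. pose proof (chord_le2 u v Hu Hv 0).
  destruct (Rle_dec (chord 0 u v) (/ 2)) as [Hs|Hb].
  - destruct (pow2_archimed (chord 0 u v) ltac:(lra)) as [J [HJ1 HJ2]].
    exists J. simpl in HJ2. assert (/ 4 <= 2 ^ J * chord 0 u v) by lra. split; [lra|].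
    pose proof (chord_ge_pow2 u v Hu Hv J HJ1).
    set (y := 2 ^ J * chord 0 u v) in *.
    assert (y ^ 2 <= / 4) by (simpl; nra).
    assert (/ 4 * (47 / 48) <= y * (1 - y ^ 2 / 12)) by (apply Rmult_le_compat; lra).
    lra.
  - exists 0%nat. simpl. lra.
Qed.

Lemma chord_weighted_le (J k : nat) : 2 ^ J * chord 0 u v <= 2 ->
  inv_sqrt2 ^ k * chord k u v <= 2 * inv_sqrt2 ^ J * inv_sqrt2 ^ nat_dist k J.
Proof.
  intros HJ. pose proof (inv_sqrt2_pow_pos k). unfold nat_dist.
  destruct (Compare_dec.le_lt_dec k J) as [Hk|Hk].
  - replace (k - J + (J - k))%nat with (J - k)%nat by lia.
    pose proof (chord_le_pow2 u v Hu Hv k). pose proof (chord_ge0 u v 0).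
    assert (Hsplit : inv_sqrt2 ^ J = inv_sqrt2 ^ k * inv_sqrt2 ^ (J - k))
      by (rewrite <- pow_add; f_equal; lia).
    pose proof (inv_sqrt2_pow_sq k). pose proof (inv_sqrt2_pow_sq J) as EJ.
    pose proof (inv_sqrt2_pow_pos (J - k)). pose proof (pow_lt 2 k ltac:(lra)).
    apply Rmult_le_reg_l with (inv_sqrt2 ^ k); [lra|].
    assert (inv_sqrt2 ^ k * (inv_sqrt2 ^ k * chord k u v) <= chord 0 u v) by nra.
    assert (chord 0 u v <= 2 * (inv_sqrt2 ^ J * inv_sqrt2 ^ J)).
    { replace (chord 0 u v) with (inv_sqrt2 ^ J * inv_sqrt2 ^ J * (2 ^ J * chord 0 u v))
        by (rewrite <- Rmult_assoc, EJ; ring).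
      pose proof (inv_sqrt2_pow_pos J). nra. }
    replace (inv_sqrt2 ^ k * (2 * inv_sqrt2 ^ J * inv_sqrt2 ^ (J - k)))
      with (2 * (inv_sqrt2 ^ J * inv_sqrt2 ^ J)) by (rewrite Hsplit at 2; ring).
    lra.
  - replace (k - J + (J - k))%nat with (k - J)%nat by lia.
    replace (inv_sqrt2 ^ k) with (inv_sqrt2 ^ J * inv_sqrt2 ^ (k - J)) at 1
      by (rewrite <- pow_add; f_equal; lia).
    pose proof (chord_le2 u v Hu Hv k). pose proof (chord_ge0 u v k).
    assert (0 < inv_sqrt2 ^ J * inv_sqrt2 ^ (k - J))
      by (apply Rmult_lt_0_compat; apply inv_sqrt2_pow_pos).
    nra.
Qed.

End Scale.

Definition hypot (x y : R) : R := sqrt (x * x + y * y).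

Lemma hypot_ge0 x y : 0 <= hypot x y.
Proof. apply sqrt_pos. Qed.

Lemma hypot_sq x y : hypot x y * hypot x y = x * x + y * y.
Proof. apply sqrt_sqrt. nra. Qed.

Lemma hypot_comm x y : hypot x y = hypot y x.
Proof. unfold hypot. f_equal. ring. Qed.

Lemma Rabs_le_hypot x y : Rabs x <= hypot x y.
Proof.
  unfold hypot. rewrite <- sqrt_Rsqr_abs. apply sqrt_le_1_alt. unfold Rsqr. nra.
Qed.

Lemma hypot_le_Rabs_add x y : hypot x y <= Rabs x + Rabs y.
Proof.
  pose proof (Rabs_pos x). pose proof (Rabs_pos y). pose proof (hypot_ge0 x y).
  apply Rsqr_incr_0_var; [|lra]. unfold Rsqr. rewrite hypot_sq.
  assert (x * x = Rabs x * Rabs x) by (rewrite <- Rabs_mult, Rabs_pos_eq; nra).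
  assert (y * y = Rabs y * Rabs y) by (rewrite <- Rabs_mult, Rabs_pos_eq; nra).
  nra.
Qed.

Lemma hypot_triang a b c d : hypot (a + c) (b + d) <= hypot a b + hypot c d.
Proof.
  pose proof (hypot_ge0 a b). pose proof (hypot_ge0 c d).
  apply Rsqr_incr_0_var; [|lra]. unfold Rsqr. rewrite hypot_sq.
  assert (a * c + b * d <= hypot a b * hypot c d).
  { unfold hypot. rewrite <- sqrt_mult by nra.
    destruct (Rle_dec (a * c + b * d) 0) as [Hn|Hp];
      [pose proof (sqrt_pos ((a * a + b * b) * (c * c + d * d))); lra|].
    rewrite <- (sqrt_square (a * c + b * d)) by lra. apply sqrt_le_1_alt.
    pose proof (Rle_0_sqr (a * d - b * c)). unfold Rsqr in *. nra. }
  pose proof (hypot_sq a b). pose proof (hypot_sq c d). nra.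
Qed.

Lemma hypot_scal k x y : 0 <= k -> hypot (k * x) (k * y) = k * hypot x y.
Proof.
  intro Hk. unfold hypot.
  replace (k * x * (k * x) + k * y * (k * y)) with (k * k * (x * x + y * y)) by ring.
  rewrite sqrt_mult_alt, sqrt_square by nra. reflexivity.
Qed.

Lemma sqdist_eq0 u v : sqdist u v = 0 -> u = v.
Proof.
  destruct u as [a b], v as [c d]. unfold sqdist; simpl. intro H.
  pose proof (Rle_0_sqr (a - c)). pose proof (Rle_0_sqr (b - d)). unfold Rsqr in *.
  assert (Ha : (a - c) * (a - c) = 0) by lra. assert (Hb : (b - d) * (b - d) = 0) by lra.
  apply Rmult_integral in Ha, Hb. f_equal; lra.
Qed.

Section Snowflake.
Variable sel : R * R -> R.
Hypothesis sel_lip : forall u v, Rabs (sel u - sel v) <= sqrt (sqdist u v).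
Hypothesis sel_origin : sel (0, 0) = 0.

Definition snow_term (b : nat) (u : R * R) (i : nat) : R :=
  inv_sqrt2 ^ (b + 16 * i) * sel (csq_iter (b + 16 * i) u).

Definition snow (b : nat) (u : R * R) : R := Series (snow_term b u).

Lemma sel_unit_le1 u : sqnorm u = 1 -> Rabs (sel u) <= 1.
Proof.
  intro Hu. pose proof (sel_lip u (0, 0)) as H. rewrite sel_origin, Rminus_0_r in H.
  replace (sqdist u (0, 0)) with (sqnorm u) in H by (unfold sqdist, sqnorm; simpl; ring).
  rewrite Hu, sqrt_1 in H. exact H.
Qed.

Lemma snow_term_sub_le k u v :
  Rabs (inv_sqrt2 ^ k * sel (csq_iter k u) - inv_sqrt2 ^ k * sel (csq_iter k v))
    <= inv_sqrt2 ^ k * chord k u v.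
Proof.
  pose proof (inv_sqrt2_pow_pos k).
  rewrite <- Rmult_minus_distr_l, Rabs_mult, Rabs_pos_eq by lra.
  apply Rmult_le_compat_l; [lra|apply sel_lip].
Qed.

Lemma snow_bound b u : sqnorm u = 1 -> ex_series (snow_term b u) /\ Rabs (snow b u) <= 3.
Proof.
  intro Hu.
  destruct (peaked_series_le (snow_term b u) 0 1 (/ 256)) as [Hex Hle]; [lra|lra| |].
  - intro i. unfold snow_term, nat_dist. rewrite Nat.sub_0_r, Nat.add_0_r, Rmult_1_l.
    rewrite Rabs_mult, Rabs_pos_eq by (apply Rlt_le, inv_sqrt2_pow_pos).
    pose proof (sel_unit_le1 _ (sqnorm_csq_iter (b + 16 * i) u Hu)).
    assert (inv_sqrt2 ^ (b + 16 * i) <= (/ 256) ^ i).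
    { rewrite <- inv_sqrt2_pow16, <- pow_mult. apply inv_sqrt2_pow_antimono. lia. }
    pose proof (inv_sqrt2_pow_pos (b + 16 * i)). pose proof (Rabs_pos (sel (csq_iter (b + 16 * i) u))).
    nra.
  - split; [exact Hex|]. unfold snow. lra.
Qed.

Lemma snow_sub u v b : sqnorm u = 1 -> sqnorm v = 1 ->
  snow b u - snow b v = Series (fun i => snow_term b u i - snow_term b v i).
Proof.
  intros Hu Hv. unfold snow. rewrite Series_minus; [reflexivity| |]; apply snow_bound; assumption.
Qed.

Lemma snow_sub_le u v b : sqnorm u = 1 -> sqnorm v = 1 -> (b < 16)%nat ->
  Rabs (snow b u - snow b v) <= 2100 * sqrt (chord 0 u v).
Proof.
  intros Hu Hv Hb. pose proof (chord_ge0 u v 0) as Hc0.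
  destruct (Req_dec (chord 0 u v) 0) as [Hz|Hnz].
  - assert (u = v) as ->.
    { apply sqdist_eq0. unfold chord in Hz. simpl in Hz.
      apply sqrt_eq_0 in Hz; [exact Hz | apply sqdist_ge0]. }
    rewrite Rminus_diag, Rabs_R0. pose proof (sqrt_pos (chord 0 v v)). lra.
  - destruct (chord_scale_exists u v Hu Hv ltac:(lra)) as [J [HJ _]].
    pose proof (inv_sqrt2_pow_pos J).
    set (i0 := ((J - b) / 16)%nat).
    destruct (peaked_series_le (fun i => snow_term b u i - snow_term b v i) i0
                (2 * inv_sqrt2 ^ J * 256) (/ 256)) as [_ Hle]; [lra|lra| |].
    + intro i. eapply Rle_trans; [apply snow_term_sub_le|].
      eapply Rle_trans; [apply (chord_weighted_le u v Hu Hv J); lra|].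
      set (k := (b + 16 * i)%nat).
      assert (Hd : inv_sqrt2 ^ nat_dist k J * / 256 <= (/ 256) ^ nat_dist i i0).
      { rewrite <- inv_sqrt2_pow16, <- pow_mult, <- pow_add. apply inv_sqrt2_pow_antimono.
        unfold nat_dist, k, i0. pose proof (Nat.div_mod (J - b) 16 ltac:(lia)).
        pose proof (Nat.mod_upper_bound (J - b) 16 ltac:(lia)). lia. }
      pose proof (inv_sqrt2_pow_pos (nat_dist k J)). nra.
    + rewrite snow_sub by assumption. eapply Rle_trans; [exact Hle|].
      pose proof (inv_sqrt2_pow_between (chord 0 u v) J Hc0 ltac:(lra)). lra.
Qed.

Lemma snow_sub_near_scale u v b J : sqnorm u = 1 -> sqnorm v = 1 ->
  2 ^ J * chord 0 u v <= 2 -> (b + 16 * (J / 16) = J)%nat ->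
  Rabs ((snow b u - snow b v)
        - inv_sqrt2 ^ J * (sel (csq_iter J u) - sel (csq_iter J v))) <= 4 / 255 * inv_sqrt2 ^ J.
Proof.
  intros Hu Hv HJ HbJ. pose proof (inv_sqrt2_pow_pos J).
  destruct (peaked_series_sub_le (fun i => snow_term b u i - snow_term b v i) (J / 16)
              (2 * inv_sqrt2 ^ J) (/ 256)) as [_ Hle]; [lra|lra| |].
  - intros i _. eapply Rle_trans; [apply snow_term_sub_le|].
    eapply Rle_trans; [apply (chord_weighted_le u v Hu Hv J); lra|].
    replace (nat_dist (b + 16 * i) J) with (16 * nat_dist i (J / 16))%nat
      by (unfold nat_dist; lia).
    rewrite pow_mult, inv_sqrt2_pow16. lra.
  - rewrite snow_sub by assumption. cbv beta in Hle. unfold snow_term at 3 4 in Hle.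
    rewrite HbJ in Hle. rewrite Rmult_minus_distr_l.
    replace (4 / 255 * inv_sqrt2 ^ J) with (2 * (2 * inv_sqrt2 ^ J) * / 256 / (1 - / 256))
      by (field; lra). exact Hle.
Qed.

End Snowflake.

Lemma fst_lip u v : Rabs (fst u - fst v) <= sqrt (sqdist u v).
Proof. apply Rabs_le_hypot. Qed.

Lemma snd_lip u v : Rabs (snd u - snd v) <= sqrt (sqdist u v).
Proof. unfold sqdist. rewrite Rplus_comm. apply Rabs_le_hypot. Qed.

Lemma snow_pair_sub_ge u v : sqnorm u = 1 -> sqnorm v = 1 -> 0 < chord 0 u v ->
  exists b, (b < 16)%nat /\
    sqrt (chord 0 u v) / 10 <= hypot (snow fst b u - snow fst b v) (snow snd b u - snow snd b v).
Proof.
  intros Hu Hv Hc.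
  destruct (chord_scale_exists u v Hu Hv Hc) as [J [HJ HcJ]].
  set (b := (J mod 16)%nat).
  assert (HbJ : (b + 16 * (J / 16) = J)%nat)
    by (unfold b; pose proof (Nat.div_mod J 16 ltac:(lia)); lia).
  exists b. split; [apply Nat.mod_upper_bound; lia|].
  pose proof (snow_sub_near_scale fst fst_lip eq_refl u v b J Hu Hv ltac:(lra) HbJ) as HP.
  pose proof (snow_sub_near_scale snd snd_lip eq_refl u v b J Hu Hv ltac:(lra) HbJ) as HQ.
  set (dP := snow fst b u - snow fst b v) in *. set (dQ := snow snd b u - snow snd b v) in *.
  set (s := inv_sqrt2 ^ J) in *.
  assert (Hs : hypot (s * (fst (csq_iter J u) - fst (csq_iter J v)))
                     (s * (snd (csq_iter J u) - snd (csq_iter J v))) = s * chord J u v)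
    by (rewrite hypot_scal by (apply Rlt_le, inv_sqrt2_pow_pos); reflexivity).
  pose proof (hypot_triang dP dQ (s * (fst (csq_iter J u) - fst (csq_iter J v)) - dP)
                                  (s * (snd (csq_iter J u) - snd (csq_iter J v)) - dQ)) as T.
  rewrite !Rplus_minus, Hs in T.
  pose proof (hypot_le_Rabs_add (s * (fst (csq_iter J u) - fst (csq_iter J v)) - dP)
                                (s * (snd (csq_iter J u) - snd (csq_iter J v)) - dQ)) as Herr.
  rewrite Rabs_minus_sym in HP, HQ.
  pose proof (inv_sqrt2_pow_between (chord 0 u v) J (chord_ge0 u v 0) ltac:(lra)) as Hscale.
  fold s in Hscale.
  assert (s * (47 / 192) <= s * chord J u v)
    by (apply Rmult_le_compat_l; [apply Rlt_le, inv_sqrt2_pow_pos | lra]).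
  pose proof (sqrt_pos (chord 0 u v)). lra.
Qed.

(** * The profile [F] and the rotation angle *)

Section Profile.
Variables (F F' : R -> R) (K : R).
Hypothesis F_deriv : forall t, 0 <= t -> has_deriv_nonneg F t (F' t).
Hypothesis K_ge0 : 0 <= K.
Hypothesis F'_lip : forall s t, 0 <= s -> 0 <= t -> Rabs (F' s - F' t) <= K * Rabs (s - t).
Hypothesis F'_0 : F' 0 = 0.

Lemma F'_le s : 0 <= s -> Rabs (F' s) <= K * s.
Proof.
  intro Hs. pose proof (F'_lip s 0 Hs (Rle_refl 0)) as H.
  rewrite F'_0, !Rminus_0_r, (Rabs_pos_eq s) in H by lra. exact H.
Qed.

Lemma F_derivable_pos t : 0 < t -> derivable_pt_lim F t (F' t).
Proof.
  intros Ht eps Heps.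
  destruct (F_deriv t (Rlt_le _ _ Ht) (eps / 2) ltac:(lra)) as [del [Hdel H]].
  assert (Hm : 0 < Rmin del t) by (apply Rmin_pos; lra).
  exists (mkposreal _ Hm). intros h Hh Hhd. simpl in Hhd.
  pose proof (Rmin_l del t). pose proof (Rmin_r del t).
  assert (Hs : 0 <= t + h) by (apply Rabs_def2 in Hhd; lra).
  specialize (H (t + h) Hs). replace (t + h - t) with h in H by ring.
  specialize (H ltac:(lra)).
  assert (Hp : 0 < Rabs h) by (apply Rabs_pos_lt; auto).
  replace ((F (t + h) - F t) / h - F' t) with ((F (t + h) - F t - F' t * h) / h) by (field; auto).
  unfold Rdiv. rewrite Rabs_mult, Rabs_inv.
  apply Rmult_le_compat_r with (r := / Rabs h) in H; [|apply Rlt_le, Rinv_0_lt_compat; auto].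
  replace (eps / 2 * Rabs h * / Rabs h) with (eps / 2) in H by (field; lra). lra.
Qed.

Lemma F_taylor a b : 0 < a -> a <= b -> Rabs (F b - F a - F' b * (b - a)) <= K * (b - a) * (b - a).
Proof.
  intros Ha Hab. destruct (Req_dec a b) as [<-|E].
  - rewrite !Rminus_diag, Rmult_0_r, Rminus_0_r, Rabs_R0, Rmult_0_r. lra.
  - destruct (MVT_cor2 (fun t => F t - F' b * t) (fun t => F' t - F' b * 1) a b ltac:(lra))
      as [c [Hc1 Hc2]].
    + intros c Hc. apply (derivable_pt_lim_minus F (mult_real_fct (F' b) id)).
      * apply F_derivable_pos; lra.
      * apply derivable_pt_lim_scal, derivable_pt_lim_id.
    + replace (F b - F a - F' b * (b - a)) with (F b - F' b * b - (F a - F' b * a)) by ring.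
      rewrite Hc1, Rmult_1_r, Rabs_mult, (Rabs_pos_eq (b - a)) by lra.
      pose proof (F'_lip c b ltac:(lra) ltac:(lra)) as H.
      rewrite (Rabs_left1 (c - b)) in H by lra.
      apply Rmult_le_compat_r; nra.
Qed.

Lemma F_sub_le_pos a b : 0 < a -> a <= b -> Rabs (F b - F a) <= K * b * (b - a).
Proof.
  intros Ha Hab. destruct (Req_dec a b) as [<-|E].
  - rewrite !Rminus_diag, Rabs_R0, Rmult_0_r. lra.
  - destruct (MVT_cor2 F F' a b ltac:(lra)) as [c [Hc1 Hc2]].
    + intros c Hc. apply F_derivable_pos; lra.
    + rewrite Hc1, Rabs_mult, (Rabs_pos_eq (b - a)) by lra.
      pose proof (F'_le c ltac:(lra)). apply Rmult_le_compat_r; nra.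
Qed.

Lemma F_sub_le a b : 0 <= a -> a <= b -> Rabs (F b - F a) <= K * b * (b - a).
Proof.
  intros Ha Hab. destruct (Req_dec a 0) as [->|Ha0]; [|apply F_sub_le_pos; lra].
  destruct (Req_dec b 0) as [->|Hb0].
  - rewrite Rminus_diag, Rabs_R0. lra.
  - apply Rle_plus_epsilon. intros eps Heps.
    destruct (F_deriv 0 (Rle_refl 0) 1 ltac:(lra)) as [del [Hdel H]].
    set (s := Rmin (del / 2) (Rmin b eps)).
    assert (Hs : 0 < s) by (apply Rmin_pos; [lra|apply Rmin_pos; lra]).
    assert (s <= del / 2) by apply Rmin_l.
    assert (s <= b /\ s <= eps) as [Hsb Hse]
      by (split; (eapply Rle_trans; [apply Rmin_r|]); [apply Rmin_l|apply Rmin_r]).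
    specialize (H s ltac:(lra)). rewrite F'_0, !Rminus_0_r, Rmult_0_l, Rminus_0_r in H.
    rewrite (Rabs_pos_eq s) in H by lra. specialize (H ltac:(lra)).
    pose proof (F_sub_le_pos s b Hs Hsb).
    pose proof (Rabs_triang (F b - F s) (F s - F 0)) as Htri.
    replace (F b - F s + (F s - F 0)) with (F b - F 0) in Htri by ring.
    assert (K * b * (b - s) <= K * b * (b - 0)) by (apply Rmult_le_compat_l; nra).
    lra.
Qed.

Lemma F'_continuous_pos t : 0 < t -> continuity_pt F' t.
Proof.
  intros Ht eps Heps. exists (Rmin t (eps / (K + 1))). split.
  - apply Rmin_pos; [lra| apply Rdiv_lt_0_compat; lra].
  - intros x [_ Hx]. simpl in *. unfold R_dist in *.
    pose proof (Rmin_l t (eps / (K + 1))). pose proof (Rmin_r t (eps / (K + 1))).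
    assert (Hxt : Rabs (x - t) < t) by lra. apply Rabs_def2 in Hxt.
    pose proof (F'_lip x t ltac:(lra) ltac:(lra)).
    assert (Hlt : (K + 1) * Rabs (x - t) < (K + 1) * (eps / (K + 1)))
      by (apply Rmult_lt_compat_l; lra).
    replace ((K + 1) * (eps / (K + 1))) with eps in Hlt by (field; lra).
    pose proof (Rabs_pos (x - t)). nra.
Qed.

(* To first order [F r - F r' = r ^ 2 (angle r - angle r') / 2]: rotating directions
   by [angle] absorbs the change of height along Σ into the angular part of [d_H]. *)
Definition angle_rate (s : R) : R := 2 * F' s / (s * s).
Definition angle (r : R) : R := RInt angle_rate 1 r.

Lemma angle_rate_continuous t : 0 < t -> continuous angle_rate t.
Proof.
  intro Ht. apply continuity_pt_filterlim. unfold angle_rate.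
  apply (continuity_pt_div (fun s => 2 * F' s) (fun s => s * s)).
  - apply (continuity_pt_mult (fun _ => 2) F');
      [apply continuity_pt_const; intros ? ?; reflexivity | apply F'_continuous_pos; lra].
  - apply (continuity_pt_mult (fun s => s) (fun s => s)); apply continuity_pt_id.
  - nra.
Qed.

Lemma ex_RInt_angle_rate a b : 0 < a -> 0 < b -> ex_RInt angle_rate a b.
Proof.
  intros Ha Hb. apply (ex_RInt_continuous (V := R_CompleteNormedModule)).
  intros z [Hz1 Hz2]. apply angle_rate_continuous.
  pose proof (Rmin_glb_lt a b 0). unfold Rmin in *. destruct (Rle_dec a b); lra.
Qed.

Lemma angle_rate_lip t r : 0 < t -> t <= r -> r <= 2 * t ->
  Rabs (angle_rate t - angle_rate r) <= 24 * K * (r - t) / (r * r).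
Proof.
  intros Ht Htr Hr2. unfold angle_rate.
  pose proof (F'_lip t r ltac:(lra) ltac:(lra)) as H1.
  rewrite (Rabs_minus_sym t r), (Rabs_pos_eq (r - t)) in H1 by lra.
  pose proof (F'_le r ltac:(lra)) as H2.
  replace (2 * F' t / (t * t) - 2 * F' r / (r * r))
    with (2 / (t * t) * ((F' t - F' r) + F' r * ((r - t) * (r + t)) / (r * r))) by (field; lra).
  assert (Hq : 0 <= (r - t) * (r + t) / (r * r)) by (apply Rdiv_le_0_compat; nra).
  assert (Hsum : Rabs ((F' t - F' r) + F' r * ((r - t) * (r + t)) / (r * r))
                 <= K * (r - t) + K * r * ((r - t) * (r + t) / (r * r))).
  { eapply Rle_trans; [apply Rabs_triang|]. unfold Rdiv at 1. rewrite Rmult_assoc, Rabs_mult.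
    rewrite (Rabs_pos_eq (_ * / _)) by exact Hq. apply Rplus_le_compat; [lra|].
    apply Rmult_le_compat_r; lra. }
  replace (K * r * ((r - t) * (r + t) / (r * r))) with (K * (r - t) * ((r + t) / r)) in Hsum
    by (field; lra).
  assert ((r + t) / r <= 2) by (apply Rle_div_l; lra).
  assert (K * (r - t) * ((r + t) / r) <= K * (r - t) * 2) by (apply Rmult_le_compat_l; nra).
  rewrite Rabs_mult, Rabs_pos_eq by (apply Rdiv_le_0_compat; nra).
  apply Rle_trans with (2 / (t * t) * (3 * K * (r - t))).
  - apply Rmult_le_compat_l; [apply Rdiv_le_0_compat; nra | lra].
  - replace (24 * K * (r - t) / (r * r)) with (2 / (t * t) * (3 * K * (r - t)) * (4 * t * t / (r * r)))
      by (field; lra).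
    assert (1 <= 4 * t * t / (r * r)) by (apply Rle_div_r; nra).
    assert (0 <= 2 / (t * t) * (3 * K * (r - t)))
      by (apply Rmult_le_pos; [apply Rdiv_le_0_compat|]; nra).
    nra.
Qed.

Lemma angle_taylor r' r : 0 < r' -> r' <= r -> r <= 2 * r' ->
  Rabs (angle r - angle r' - angle_rate r * (r - r')) <= 24 * K * (r - r') * (r - r') / (r * r).
Proof.
  intros Hr' Hr'r Hr2. unfold angle.
  replace (RInt angle_rate 1 r) with (RInt angle_rate 1 r' + RInt angle_rate r' r)
    by (apply (RInt_Chasles angle_rate 1 r' r); apply ex_RInt_angle_rate; lra).
  replace (RInt angle_rate 1 r' + RInt angle_rate r' r - RInt angle_rate 1 r' - angle_rate r * (r - r'))
    with (RInt angle_rate r' r - RInt (fun _ => angle_rate r) r' r)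
    by (rewrite RInt_const; unfold scal; simpl; unfold mult; simpl; ring).
  replace (RInt angle_rate r' r - RInt (fun _ => angle_rate r) r' r)
    with (RInt (fun t => angle_rate t - angle_rate r) r' r)
    by (apply (RInt_minus angle_rate (fun _ => angle_rate r));
        [apply ex_RInt_angle_rate; lra | apply ex_RInt_const]).
  replace (24 * K * (r - r') * (r - r') / (r * r)) with ((r - r') * (24 * K * (r - r') / (r * r)))
    by (field; lra).
  apply abs_RInt_le_const; [lra| |].
  - apply (ex_RInt_minus (V := R_CompleteNormedModule));
      [apply ex_RInt_angle_rate; lra | apply ex_RInt_const].
  - intros t [Ht1 Ht2]. eapply Rle_trans; [apply angle_rate_lip; lra|].
    unfold Rdiv. apply Rmult_le_compat_r; [apply Rlt_le, Rinv_0_lt_compat; nra|]. nra.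
Qed.

End Profile.

(** * Comparing the vertical term with a chord *)

Lemma Rabs_sub_le a b : Rabs (a - b) <= Rabs a + Rabs b.
Proof. rewrite <- (Rabs_Ropp b). apply Rabs_triang. Qed.

Lemma sin_abs_le x : Rabs (sin x) <= Rabs x.
Proof.
  assert (Hpos : forall y, 0 <= y -> Rabs (sin y) <= y).
  { intros y Hy. destruct (Req_dec y 0) as [->|Hy0]; [rewrite sin_0, Rabs_R0; lra|].
    pose proof (sin_lt_x y ltac:(lra)). pose proof (SIN_bound y). apply Rabs_le.
    destruct (Rle_dec 1 y); [lra|]. pose proof PI2_3_2. pose proof (sin_ge_0 y Hy ltac:(lra)). lra. }
  destruct (Rle_dec 0 x).
  - rewrite (Rabs_pos_eq x) by lra. apply Hpos; lra.
  - rewrite (Rabs_left x), <- Rabs_Ropp, <- sin_neg by lra. apply Hpos; lra.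
Qed.

Lemma one_sub_cos_bounds x : 0 <= 1 - cos x <= x * x / 2.
Proof.
  replace (cos x) with (1 - 2 * sin (x / 2) * sin (x / 2)) by (rewrite <- cos_2a_sin; f_equal; field).
  pose proof (Rsqr_le_abs_1 _ _ (sin_abs_le (x / 2))). pose proof (Rle_0_sqr (sin (x / 2))).
  unfold Rsqr in *. lra.
Qed.

Lemma sin_sub_id_le x : Rabs (sin x - x) <= x * x.
Proof.
  destruct (Rle_dec 2 (Rabs x)) as [Hb|Hs].
  - pose proof (SIN_bound x). pose proof (Rabs_triang (sin x) (- x)) as Htri.
    rewrite Rabs_Ropp in Htri. assert (Rabs (sin x) <= 1) by (apply Rabs_le; lra).
    rewrite <- (Rabs_pos_eq (x * x)), Rabs_mult by nra. unfold Rminus. nra.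
  - destruct (MVT_gen (fun t => sin t - t) 0 x (fun t => cos t - 1)) as [c [Hc E]].
    + intros t _. auto_derive; [exact I | ring].
    + intros t _. apply continuity_pt_minus; [apply continuity_sin | apply continuity_pt_id].
    + rewrite sin_0, !Rminus_0_r in E. rewrite E, Rabs_mult.
      assert (Hcx : Rabs c <= Rabs x).
      { unfold Rmin, Rmax in Hc. apply Rabs_le.
        destruct (Rle_dec 0 x); [rewrite Rabs_pos_eq | rewrite Rabs_left]; lra. }
      pose proof (one_sub_cos_bounds c).
      rewrite Rabs_minus_sym, Rabs_pos_eq by lra.
      assert (Hcc : c * c = Rabs c * Rabs c) by (rewrite <- Rabs_mult, Rabs_pos_eq; nra).
      rewrite <- (Rabs_pos_eq (x * x)), Rabs_mult by nra.
      pose proof (Rabs_pos x). pose proof (Rabs_pos c). nra.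
Qed.

Definition dot (u v : R * R) : R := fst u * fst v + snd u * snd v.
Definition cross (u v : R * R) : R := fst u * snd v - fst v * snd u.
Definition rot (g : R) (u : R * R) : R * R :=
  (fst u * cos g + snd u * sin g, - fst u * sin g + snd u * cos g).

Lemma cross_dot_sq u v : cross u v * cross u v + dot u v * dot u v = sqnorm u * sqnorm v.
Proof. unfold cross, dot, sqnorm. ring. Qed.

Lemma sqdist_sqnorm_dot u v : sqdist u v = sqnorm u + sqnorm v - 2 * dot u v.
Proof. unfold sqdist, sqnorm, dot. ring. Qed.

Lemma sqnorm_rot g u : sqnorm (rot g u) = sqnorm u.
Proof.
  pose proof (sin2_cos2 g) as H. unfold Rsqr in H. unfold sqnorm, rot; simpl.
  transitivity ((fst u * fst u + snd u * snd u) * (sin g * sin g + cos g * cos g)); [ring|].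
  rewrite H. ring.
Qed.

Lemma dot_rot g0 g1 u v :
  dot (rot g0 u) (rot g1 v) = cos (g0 - g1) * dot u v - sin (g0 - g1) * cross u v.
Proof. unfold dot, cross, rot; simpl. rewrite cos_minus, sin_minus. ring. Qed.

Lemma cross_rot g0 g1 u v :
  cross (rot g0 u) (rot g1 v) = cos (g0 - g1) * cross u v + sin (g0 - g1) * dot u v.
Proof. unfold dot, cross, rot; simpl. rewrite cos_minus, sin_minus. ring. Qed.

Lemma unit_cross_chord u v : sqnorm u = 1 -> sqnorm v = 1 ->
  Rabs (cross u v) <= sqrt (sqdist u v) <= Rabs (cross u v) + sqdist u v / 2.
Proof.
  intros Hu Hv. pose proof (cross_dot_sq u v) as E. rewrite Hu, Hv in E.
  pose proof (sqdist_sqnorm_dot u v) as Ed. rewrite Hu, Hv in Ed.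
  pose proof (sqdist_unit_le4 u v Hu Hv). pose proof (sqrt_pos (sqdist u v)).
  pose proof (sqrt_sqrt (sqdist u v) (sqdist_ge0 u v)) as Hc.
  set (c := sqrt (sqdist u v)) in *. rewrite <- Hc.
  assert (HX : cross u v * cross u v = c * c - c * c * (c * c) / 4) by nra.
  assert (HA : Rabs (cross u v) * Rabs (cross u v) = cross u v * cross u v)
    by (rewrite <- Rabs_mult; apply Rabs_pos_eq; nra).
  pose proof (Rabs_pos (cross u v)). assert (c <= 2) by nra.
  split.
  - apply Rsqr_incr_0_var; unfold Rsqr; nra.
  - destruct (Rle_dec (c - c * c / 2) 0); [nra|].
    assert (Hsq : (c - c * c / 2) * (c - c * c / 2) <= Rabs (cross u v) * Rabs (cross u v)) by nra.
    apply Rsqr_incr_0_var in Hsq; unfold Rsqr; lra.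
Qed.

(* Two points of Σ in polar form: radii [r' <= r <= 2 r'], unit directions [e], [e'],
   heights [F0 = F r], [F1 = F r'], slope [Fp = F' r] and rotation angles
   [g0 = angle r], [g1 = angle r']; the last three hypotheses are their Taylor bounds. *)
Section NearPair.
Variables (K r r' F0 F1 Fp g0 g1 : R) (e e' : R * R).
Hypotheses (K_ge0 : 0 <= K) (r'_pos : 0 < r') (r'_le : r' <= r) (r_le : r <= 2 * r').
Hypotheses (He : sqnorm e = 1) (He' : sqnorm e' = 1).
Hypothesis HF : Rabs (F0 - F1 - Fp * (r - r')) <= K * (r - r') * (r - r').
Hypothesis HFp : Rabs Fp <= K * r.
Hypothesis Hangle :
  Rabs (r * r * (g0 - g1) - 2 * Fp * (r - r')) <= 24 * K * (r - r') * (r - r').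

Lemma angle_gap_le : Rabs (r * (g0 - g1)) <= 14 * K * (r - r').
Proof.
  assert (Hrr : Rabs (r * r * (g0 - g1)) <= 14 * K * r * (r - r')).
  { replace (r * r * (g0 - g1)) with ((r * r * (g0 - g1) - 2 * Fp * (r - r')) + 2 * Fp * (r - r'))
      by ring.
    eapply Rle_trans; [apply Rabs_triang|].
    rewrite !Rabs_mult, (Rabs_pos_eq 2), (Rabs_pos_eq (r - r')) by lra.
    assert (Rabs Fp * (r - r') <= K * r * (r - r')) by (apply Rmult_le_compat_r; lra).
    assert (0 <= K * (r - r')) by nra. nra. }
  rewrite Rmult_assoc, Rabs_mult, (Rabs_pos_eq r) in Hrr by lra.
  apply Rmult_le_reg_l with r; [lra|]. nra.
Qed.

Lemma radial_error :
  Rabs (F0 - F1 - / 2 * r * r' * (g0 - g1)) <= 14 * K * (r - r') * (r - r').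
Proof.
  replace (F0 - F1 - / 2 * r * r' * (g0 - g1))
    with ((F0 - F1 - Fp * (r - r')) + Fp * (r - r') * ((r - r') / r)
          - / 2 * (r' / r) * (r * r * (g0 - g1) - 2 * Fp * (r - r'))) by (field; lra).
  assert (Hq : 0 <= (r - r') / r <= 1) by (split; [apply Rdiv_le_0_compat | apply -> Rdiv_le_1]; lra).
  assert (Hq' : 0 <= r' / r <= 1) by (split; [apply Rdiv_le_0_compat | apply -> Rdiv_le_1]; lra).
  assert (Hslope : Rabs (Fp * (r - r') * ((r - r') / r)) <= K * (r - r') * (r - r')).
  { rewrite !Rabs_mult, (Rabs_pos_eq (r - r')), (Rabs_pos_eq (_ / _)) by lra.
    replace (K * (r - r') * (r - r')) with (K * r * (r - r') * ((r - r') / r)) by (field; lra).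
    apply Rmult_le_compat_r; [lra|]. apply Rmult_le_compat_r; lra. }
  assert (Hangle' : Rabs (/ 2 * (r' / r) * (r * r * (g0 - g1) - 2 * Fp * (r - r')))
               <= 12 * K * (r - r') * (r - r')).
  { rewrite !Rabs_mult, (Rabs_pos_eq (/ 2)), (Rabs_pos_eq (r' / r)) by lra.
    pose proof (Rabs_pos (r * r * (g0 - g1) - 2 * Fp * (r - r'))).
    assert (r' / r * Rabs (r * r * (g0 - g1) - 2 * Fp * (r - r'))
            <= 1 * (24 * K * (r - r') * (r - r'))) by (apply Rmult_le_compat; lra).
    lra. }
  pose proof (Rabs_sub_le (F0 - F1 - Fp * (r - r') + Fp * (r - r') * ((r - r') / r))
                          (/ 2 * (r' / r) * (r * r * (g0 - g1) - 2 * Fp * (r - r')))).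
  pose proof (Rabs_triang (F0 - F1 - Fp * (r - r')) (Fp * (r - r') * ((r - r') / r))).
  lra.
Qed.

Lemma angular_error (s d : R) :
  Rabs s <= 1 -> 0 <= 1 - d ->
  Rabs (s * (1 - cos (g0 - g1)) + (g0 - g1 - sin (g0 - g1)) + sin (g0 - g1) * (1 - d))
    <= 3 / 2 * ((g0 - g1) * (g0 - g1)) + Rabs (g0 - g1) * (1 - d).
Proof.
  intros Hs Hd. set (b := g0 - g1).
  pose proof (one_sub_cos_bounds b). pose proof (sin_sub_id_le b). pose proof (sin_abs_le b).
  pose proof (Rabs_triang (s * (1 - cos b) + (b - sin b)) (sin b * (1 - d))) as T1.
  pose proof (Rabs_triang (s * (1 - cos b)) (b - sin b)) as T2.
  rewrite Rabs_minus_sym in T2.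
  rewrite (Rabs_mult s), (Rabs_pos_eq (1 - cos b)) in T2 by lra.
  rewrite (Rabs_mult (sin b)), (Rabs_pos_eq (1 - d)) in T1 by lra.
  assert (Rabs s * (1 - cos b) <= 1 * (b * b / 2)) by (apply Rmult_le_compat; try lra; apply Rabs_pos).
  assert (Rabs (sin b) * (1 - d) <= Rabs b * (1 - d)) by (apply Rmult_le_compat_r; lra).
  lra.
Qed.

Lemma unit_pair_bounds : Rabs (cross e e') <= 1 /\ 0 <= 1 - dot e e'.
Proof.
  pose proof (cross_dot_sq e e') as E. rewrite He, He' in E.
  split; [apply Rabs_le|]; nra.
Qed.

Lemma angle_gap_sq_le : r * r * ((g0 - g1) * (g0 - g1)) <= 196 * K * K * ((r - r') * (r - r')).
Proof.
  pose proof angle_gap_le as H. pose proof (Rabs_pos (r * (g0 - g1))).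
  assert (Hsq : Rabs (r * (g0 - g1)) * Rabs (r * (g0 - g1))
                <= 14 * K * (r - r') * (14 * K * (r - r'))) by (apply Rmult_le_compat; lra).
  rewrite <- Rabs_mult, Rabs_pos_eq in Hsq by apply Rle_0_sqr. nra.
Qed.

Lemma angle_gap_le_K : Rabs (g0 - g1) <= 7 * K.
Proof.
  pose proof angle_gap_le as H. rewrite Rabs_mult, (Rabs_pos_eq r) in H by lra.
  apply Rmult_le_reg_l with r; [lra|].
  assert (0 <= K * (2 * r' - r)) by (apply Rmult_le_pos; lra). nra.
Qed.

Lemma vertical_error :
  Rabs (F0 - F1 + / 2 * r * r' * cross e e' - / 2 * r * r' * cross (rot g0 e) (rot g1 e'))
    <= (35 / 2 * K + 147 * K * K) * ((r - r') * (r - r') + 2 * r * r' * (1 - dot e e')).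
Proof.
  destruct unit_pair_bounds as [Hs Hd].
  set (s := cross e e') in *. set (d := dot e e') in *. set (b := g0 - g1).
  rewrite cross_rot. fold s d b.
  replace (F0 - F1 + / 2 * r * r' * s - / 2 * r * r' * (cos b * s + sin b * d))
    with ((F0 - F1 - / 2 * r * r' * b)
          + / 2 * r * r' * (s * (1 - cos b) + (b - sin b) + sin b * (1 - d))) by ring.
  pose proof radial_error as Hrad. pose proof (angular_error s d Hs Hd) as Hang. fold b in Hrad, Hang.
  pose proof angle_gap_sq_le as Hb2. pose proof angle_gap_le_K as HbK. fold b in Hb2, HbK.
  eapply Rle_trans; [apply Rabs_triang|].
  rewrite (Rabs_mult (/ 2 * r * r')), (Rabs_pos_eq (/ 2 * r * r')) by nra.
  assert (Hrr : 0 <= r * r') by nra.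
  assert (/ 2 * r * r' * Rabs (s * (1 - cos b) + (b - sin b) + sin b * (1 - d))
          <= / 2 * r * r' * (3 / 2 * (b * b) + Rabs b * (1 - d))) by (apply Rmult_le_compat_l; nra).
  assert (r * r' * (b * b) <= r * r * (b * b)) by (apply Rmult_le_compat_r; nra).
  assert (r * r' * (Rabs b * (1 - d)) <= r * r' * (7 * K * (1 - d)))
    by (apply Rmult_le_compat_l; [lra | apply Rmult_le_compat_r; lra]).
  assert (0 <= K * (r * r' * (1 - d))) by (apply Rmult_le_pos; [lra | apply Rmult_le_pos; lra]).
  assert (0 <= K * K * (r * r' * (1 - d))) by (apply Rmult_le_pos; [nra | apply Rmult_le_pos; lra]).
  assert (0 <= K * ((r - r') * (r - r'))) by (apply Rmult_le_pos; [lra | apply Rle_0_sqr]).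
  nra.
Qed.

Lemma chord_rot_sq_le :
  r' * r' * sqdist (rot g0 e) (rot g1 e')
    <= (4 + 392 * K * K) * ((r - r') * (r - r') + 2 * r * r' * (1 - dot e e')).
Proof.
  destruct unit_pair_bounds as [Hs Hd].
  set (b := g0 - g1).
  assert (Hc : sqdist (rot g0 e) (rot g1 e') <= 4 * (1 - dot e e') + 2 * (b * b)).
  { rewrite sqdist_sqnorm_dot, !sqnorm_rot, He, He', dot_rot. fold b.
    pose proof (cross_dot_sq e e') as E. rewrite He, He' in E.
    pose proof (sin2_cos2 b) as Ecs. unfold Rsqr in Ecs.
    pose proof (one_sub_cos_bounds b).
    assert (sin b * sin b <= 2 * (1 - cos b)) by nra.
    assert (cross e e' * cross e e' <= 2 * (1 - dot e e')) by nra.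
    assert (0 <= (1 - dot e e') * (1 - cos b)) by (apply Rmult_le_pos; lra).
    pose proof (Rle_0_sqr (sin b - cross e e')). unfold Rsqr in *. nra. }
  pose proof angle_gap_sq_le as Hb2. fold b in Hb2.
  assert (r' * r' * sqdist (rot g0 e) (rot g1 e') <= r * r * (4 * (1 - dot e e') + 2 * (b * b))).
  { apply Rmult_le_compat; try nra. apply sqdist_ge0. }
  assert (r * r * (1 - dot e e') <= 2 * r * r' * (1 - dot e e'))
    by (apply Rmult_le_compat_r; nra).
  assert (0 <= K * K * (2 * r * r' * (1 - dot e e')))
    by (apply Rmult_le_pos; [nra | apply Rmult_le_pos; nra]).
  nra.
Qed.

Lemma vertical_chord_compare :
  let T := F0 - F1 + / 2 * r * r' * cross e e' in
  let c := sqrt (sqdist (rot g0 e) (rot g1 e')) in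
  let W2 := (r - r') * (r - r') + 2 * r * r' * (1 - dot e e') in
  Rabs T <= r' * r' * c + 500 * (1 + K) ^ 2 * W2 /\
  r' * r' * c <= 2 * Rabs T + 500 * (1 + K) ^ 2 * W2.
Proof.
  intros T c W2.
  destruct unit_pair_bounds as [Hs Hd].
  assert (HW : 0 <= W2).
  { unfold W2. pose proof (Rle_0_sqr (r - r')). unfold Rsqr in *.
    assert (0 <= r * r' * (1 - dot e e')) by (apply Rmult_le_pos; nra). lra. }
  pose proof vertical_error as Herr. pose proof chord_rot_sq_le as Hc2. fold W2 in Herr, Hc2.
  set (X := cross (rot g0 e) (rot g1 e')) in *.
  destruct (unit_cross_chord (rot g0 e) (rot g1 e')) as [HXc HcX]; try (rewrite sqnorm_rot; assumption).
  fold X c in HXc, HcX.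
  assert (Hcsq : c * c = sqdist (rot g0 e) (rot g1 e')) by (apply sqrt_sqrt, sqdist_ge0).
  rewrite <- Hcsq in HcX, Hc2. pose proof (sqrt_pos (sqdist (rot g0 e) (rot g1 e'))) as Hc0.
  fold c in Hc0.
  assert (HrX : Rabs (/ 2 * r * r' * X) <= r' * r' * c).
  { rewrite Rabs_mult, (Rabs_pos_eq (/ 2 * r * r')) by nra.
    assert (0 <= r' * (2 * r' - r) * c) by (repeat apply Rmult_le_pos; lra).
    apply Rle_trans with (/ 2 * r * r' * c); [apply Rmult_le_compat_l; nra | lra]. }
  assert (Hr'X : r' * r' * Rabs X <= 2 * Rabs (/ 2 * r * r' * X)).
  { rewrite Rabs_mult, (Rabs_pos_eq (/ 2 * r * r')) by nra.
    assert (0 <= r' * (r - r') * Rabs X) by (repeat apply Rmult_le_pos; try lra; apply Rabs_pos).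
    lra. }
  assert (Hr'c : r' * r' * c <= r' * r' * Rabs X + r' * r' * (c * c) / 2)
    by (pose proof (Rmult_le_compat_l (r' * r') _ _ ltac:(nra) HcX); lra).
  pose proof (Rabs_triang (T - / 2 * r * r' * X) (/ 2 * r * r' * X)) as T1.
  pose proof (Rabs_triang T (- (T - / 2 * r * r' * X))) as T2. rewrite Rabs_Ropp in T2.
  replace (T - / 2 * r * r' * X + / 2 * r * r' * X) with T in T1 by ring.
  replace (T + - (T - / 2 * r * r' * X)) with (/ 2 * r * r' * X) in T2 by ring.
  assert (Hconst1 : (35 / 2 * K + 147 * K * K) * W2 <= 500 * (1 + K) ^ 2 * W2)
    by (apply Rmult_le_compat_r; nra).
  assert (Hconst2 : 2 * ((35 / 2 * K + 147 * K * K) * W2) + (4 + 392 * K * K) * W2 / 2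
                    <= 500 * (1 + K) ^ 2 * W2).
  { replace (2 * ((35 / 2 * K + 147 * K * K) * W2) + (4 + 392 * K * K) * W2 / 2)
      with ((35 * K + 490 * K * K + 2) * W2) by field.
    apply Rmult_le_compat_r; nra. }
  unfold T in *. split; lra.
Qed.

End NearPair.

(** * The embedding of Σ into [R^34] *)

Lemma sumsq_ge0 n u v : 0 <= sumsq n u v.
Proof. induction n as [|n IH]; simpl; [lra|]. pose proof (pow2_ge_0 (u n - v n)). lra. Qed.

Lemma sumsq_le_add n k u v : sumsq n u v <= sumsq (n + k) u v.
Proof.
  induction k as [|k IH]; [rewrite Nat.add_0_r; lra|].
  rewrite Nat.add_succ_r. simpl. pose proof (pow2_ge_0 (u (n + k)%nat - v (n + k)%nat)). lra.
Qed.

Lemma sumsq_pair_le i j n u v : (i < j < n)%nat ->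
  (u i - v i) * (u i - v i) + (u j - v j) * (u j - v j) <= sumsq n u v.
Proof.
  intros Hijn.
  pose proof (sumsq_le_add (S i) (j - S i) u v) as Hi. replace (S i + (j - S i))%nat with j in Hi by lia.
  pose proof (sumsq_le_add (S j) (n - S j) u v) as Hj. replace (S j + (n - S j))%nat with n in Hj by lia.
  pose proof (sumsq_ge0 i u v). simpl in Hi, Hj. lra.
Qed.

Lemma sumsq_comm n u v : sumsq n u v = sumsq n v u.
Proof. induction n as [|n IH]; simpl; [reflexivity|]. rewrite IH. f_equal. ring. Qed.

Lemma euclid_dist_comm n u v : euclid_dist n u v = euclid_dist n v u.
Proof. unfold euclid_dist. rewrite sumsq_comm. reflexivity. Qed.

Fixpoint sum_abs_sub (n : nat) (u v : nat -> R) : R :=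
  match n with O => 0 | S m => sum_abs_sub m u v + Rabs (u m - v m) end.

Lemma euclid_dist_le_sum_abs_sub n u v : euclid_dist n u v <= sum_abs_sub n u v.
Proof.
  unfold euclid_dist. induction n as [|n IH]; simpl; [rewrite sqrt_0; lra|].
  pose proof (sumsq_ge0 n u v) as Hs. pose proof (sqrt_pos (sumsq n u v)).
  pose proof (Rabs_pos (u n - v n)).
  rewrite <- (sqrt_square (sum_abs_sub n u v + Rabs (u n - v n))) by lra.
  apply sqrt_le_1_alt.
  assert ((u n - v n) ^ 2 = Rabs (u n - v n) * Rabs (u n - v n))
    by (rewrite <- Rabs_mult, Rabs_pos_eq by apply Rle_0_sqr; ring).
  pose proof (sqrt_sqrt (sumsq n u v) Hs). nra.
Qed.

Lemma sum_abs_sub_pairs m u v B :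
  (forall b, (b < m)%nat ->
     Rabs (u (2 + 2 * b)%nat - v (2 + 2 * b)%nat) + Rabs (u (3 + 2 * b)%nat - v (3 + 2 * b)%nat) <= B) ->
  sum_abs_sub (2 + 2 * m) u v <= Rabs (u 0%nat - v 0%nat) + Rabs (u 1%nat - v 1%nat) + INR m * B.
Proof.
  induction m as [|m IH]; intro HB; [simpl; lra|].
  replace (2 + 2 * S m)%nat with (S (S (2 + 2 * m))) by lia. cbn [sum_abs_sub].
  change (S (2 + 2 * m)) with (3 + 2 * m)%nat.
  rewrite S_INR. specialize (IH (fun b Hb => HB b ltac:(lia))). specialize (HB m ltac:(lia)). lra.
Qed.

Lemma dH_comm p q : dH p q = dH q p.
Proof.
  destruct p as [[x y] z], q as [[x' y'] z']. unfold dH.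
  rewrite (Rabs_minus_sym x), (Rabs_minus_sym y).
  replace (z' - z + / 2 * (x' * y - x * y')) with (- (z - z' + / 2 * (x * y' - x' * y))) by ring.
  rewrite Rabs_Ropp. reflexivity.
Qed.

Lemma sqrt_add_le a b : 0 <= a -> 0 <= b -> sqrt (a + b) <= sqrt a + sqrt b.
Proof.
  intros Ha Hb. pose proof (sqrt_pos a). pose proof (sqrt_pos b).
  rewrite <- (sqrt_square (sqrt a + sqrt b)) by lra. apply sqrt_le_1_alt.
  pose proof (sqrt_sqrt a Ha). pose proof (sqrt_sqrt b Hb). nra.
Qed.

Lemma hypot_sub_le x y x' y' : Rabs (hypot x y - hypot x' y') <= hypot (x - x') (y - y').
Proof.
  pose proof (hypot_triang (x - x') (y - y') x' y') as H1.
  pose proof (hypot_triang (x' - x) (y' - y) x y) as H2.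
  replace (x - x' + x') with x in H1 by ring. replace (y - y' + y') with y in H1 by ring.
  replace (x' - x + x) with x' in H2 by ring. replace (y' - y + y) with y' in H2 by ring.
  replace (hypot (x' - x) (y' - y)) with (hypot (x - x') (y - y')) in H2
    by (unfold hypot; f_equal; ring).
  apply Rabs_le. lra.
Qed.

Lemma cross_le_hypot_mul x y x' y' : Rabs (x * y' - x' * y) <= hypot x y * hypot x' y'.
Proof.
  pose proof (hypot_ge0 x y). pose proof (hypot_ge0 x' y').
  apply Rsqr_incr_0_var; [|nra]. unfold Rsqr.
  rewrite <- Rabs_mult, Rabs_pos_eq by apply Rle_0_sqr.
  replace (hypot x y * hypot x' y' * (hypot x y * hypot x' y'))
    with ((hypot x y * hypot x y) * (hypot x' y' * hypot x' y')) by ring.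
  rewrite !hypot_sq. pose proof (Rle_0_sqr (x * x' + y * y')). unfold Rsqr in *. nra.
Qed.

Definition twisted_dir (F' : R -> R) (x y : R) : R * R :=
  rot (angle F' (hypot x y)) (x / hypot x y, y / hypot x y).

(* Coordinates 0, 1 carry [w]; coordinates [2 + 2 b] and [3 + 2 b] carry [|w|] times
   the two components of the [b]-th snowflake block of the twisted direction. *)
Definition embed (F' : R -> R) (p : point) (i : nat) : R :=
  let '(x, y, _) := p in
  match i with
  | O => x
  | S O => y
  | S (S j) => hypot x y *
      (if Nat.even j then snow fst (Nat.div2 j) (twisted_dir F' x y)
       else snow snd (Nat.div2 j) (twisted_dir F' x y))
  end.

Lemma embed_fst_block F' x y z b :
  embed F' (x, y, z) (2 + 2 * b) = hypot x y * snow fst b (twisted_dir F' x y).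
Proof.
  replace (2 + 2 * b)%nat with (S (S (2 * b))) by lia. unfold embed; cbv beta iota.
  rewrite Nat.even_mul, Nat.div2_double. reflexivity.
Qed.

Lemma embed_snd_block F' x y z b :
  embed F' (x, y, z) (3 + 2 * b) = hypot x y * snow snd b (twisted_dir F' x y).
Proof.
  replace (3 + 2 * b)%nat with (S (S (S (2 * b)))) by lia. unfold embed; cbv beta iota.
  rewrite Nat.even_succ, Nat.odd_mul, Nat.div2_succ_double. reflexivity.
Qed.

Lemma twisted_dir_unit F' x y : 0 < hypot x y -> sqnorm (twisted_dir F' x y) = 1.
Proof.
  intro Hr. unfold twisted_dir. rewrite sqnorm_rot. unfold sqnorm; simpl.
  pose proof (hypot_sq x y). field_simplify_eq; [lra | lra].
Qed.

Section EmbedDist.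
Variables (F' : R -> R) (x y z x' y' z' : R).
Local Notation D := (euclid_dist 34 (embed F' (x, y, z)) (embed F' (x', y', z'))).
Local Notation dP b := (hypot x y * snow fst b (twisted_dir F' x y)
                        - hypot x' y' * snow fst b (twisted_dir F' x' y')).
Local Notation dQ b := (hypot x y * snow snd b (twisted_dir F' x y)
                        - hypot x' y' * snow snd b (twisted_dir F' x' y')).

Lemma embed_dist_ge_planar : hypot (x - x') (y - y') <= D.
Proof.
  apply sqrt_le_1_alt. apply (sumsq_pair_le 0 1 34 (embed F' (x, y, z)) (embed F' (x', y', z'))). lia.
Qed.

Lemma embed_dist_ge_block b : (b < 16)%nat -> hypot (dP b) (dQ b) <= D.
Proof.
  intro Hb. apply sqrt_le_1_alt.
  pose proof (sumsq_pair_le (2 + 2 * b) (3 + 2 * b) 34 (embed F' (x, y, z)) (embed F' (x', y', z'))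
                ltac:(lia)) as H.
  rewrite !embed_fst_block, !embed_snd_block in H. exact H.
Qed.

Lemma embed_dist_le_blocks B : (forall b, (b < 16)%nat -> Rabs (dP b) + Rabs (dQ b) <= B) ->
  D <= Rabs (x - x') + Rabs (y - y') + 16 * B.
Proof.
  intros HB. eapply Rle_trans; [apply euclid_dist_le_sum_abs_sub|].
  change 34%nat with (2 + 2 * 16)%nat.
  eapply Rle_trans; [apply sum_abs_sub_pairs|].
  - intros b Hb. rewrite !embed_fst_block, !embed_snd_block. apply HB, Hb.
  - simpl. replace (INR 16) with 16 by (simpl; ring). lra.
Qed.

End EmbedDist.

Lemma hypot_mul_snow_le sel F' x y b :
  (forall u v, Rabs (sel u - sel v) <= sqrt (sqdist u v)) -> sel (0, 0) = 0 ->
  Rabs (hypot x y * snow sel b (twisted_dir F' x y)) <= 3 * hypot x y.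
Proof.
  intros Hlip H0. pose proof (hypot_ge0 x y).
  destruct (Req_dec (hypot x y) 0) as [E|E]; [rewrite E, Rmult_0_l, Rabs_R0; lra|].
  rewrite Rabs_mult, Rabs_pos_eq, Rmult_comm by lra.
  apply Rmult_le_compat_r; [lra|]. apply (snow_bound sel Hlip H0), twisted_dir_unit. lra.
Qed.

Lemma Rabs_add_le_2hypot x y : Rabs x + Rabs y <= 2 * hypot x y.
Proof.
  pose proof (Rabs_le_hypot x y). pose proof (Rabs_le_hypot y x) as Hy.
  rewrite hypot_comm in Hy. lra.
Qed.

Lemma sqrt_add_500_le a M W : 0 <= a -> 0 <= M -> 0 <= W ->
  sqrt (a + 500 * M ^ 2 * (W * W)) <= sqrt a + 23 * M * W.
Proof.
  intros Ha HM HW. assert (0 <= M * W) by nra.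
  eapply Rle_trans; [apply sqrt_add_le; [lra | nra]|].
  apply Rplus_le_compat_l. rewrite <- (sqrt_square (23 * M * W)) by nra.
  apply sqrt_le_1_alt. simpl. nra.
Qed.

Section Pair.
Variables (F F' : R -> R) (K : R).
Hypothesis F_deriv : forall t, 0 <= t -> has_deriv_nonneg F t (F' t).
Hypothesis K_ge0 : 0 <= K.
Hypothesis F'_lip : forall s t, 0 <= s -> 0 <= t -> Rabs (F' s - F' t) <= K * Rabs (s - t).
Hypothesis F'_0 : F' 0 = 0.

Definition bilip_const : R := 2000000 * (1 + K).

Variables (x y z x' y' z' : R).
Hypotheses (Hz : z = F (hypot x y)) (Hz' : z' = F (hypot x' y')).
Hypothesis r'_le : hypot x' y' <= hypot x y.

Local Notation r := (hypot x y).
Local Notation r' := (hypot x' y').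
Local Notation W := (hypot (x - x') (y - y')).
Local Notation hor := (Rabs (x - x') + Rabs (y - y')).
Local Notation T := (z - z' + / 2 * (x * y' - x' * y)).
Local Notation D := (euclid_dist 34 (embed F' (x, y, z)) (embed F' (x', y', z'))).
Local Notation c := (chord 0 (twisted_dir F' x y) (twisted_dir F' x' y')).

Lemma radius_gap_le : r - r' <= W.
Proof. pose proof (hypot_sub_le x y x' y') as H. rewrite Rabs_pos_eq in H by lra. exact H. Qed.

Lemma pair_far : 2 * r' <= r ->
  hor + sqrt (Rabs T) <= bilip_const * D /\ D <= bilip_const * (hor + sqrt (Rabs T)).
Proof.
  intros Hfar. pose proof radius_gap_le as Hgap. pose proof (hypot_ge0 x' y') as Hr'0.
  pose proof (hypot_ge0 (x - x') (y - y')) as HW0.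
  pose proof (hypot_le_Rabs_add (x - x') (y - y')) as HWhor.
  pose proof (Rabs_add_le_2hypot (x - x') (y - y')) as HhorW.
  pose proof (embed_dist_ge_planar F' x y z x' y' z') as HWD.
  pose proof (sqrt_pos (Rabs T)) as HsT. unfold bilip_const.
  assert (Hr : r <= 2 * W) by lra.
  assert (HT : Rabs T <= (K + 1) * (r * r)).
  { subst z z'. pose proof (F_sub_le F F' K F_deriv K_ge0 F'_lip F'_0 r' r ltac:(lra) r'_le) as HF.
    pose proof (cross_le_hypot_mul x y x' y') as Hcr.
    pose proof (Rabs_triang (F r - F r') (/ 2 * (x * y' - x' * y))) as Htri.
    rewrite Rabs_mult, (Rabs_pos_eq (/ 2)) in Htri by lra.
    assert (K * r * (r - r') <= K * r * r) by (apply Rmult_le_compat_l; nra).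
    assert (r * r' <= r * r / 2) by nra. nra. }
  assert (HTW : sqrt (Rabs T) <= 2 * (K + 1) * W).
  { rewrite <- (sqrt_square (2 * (K + 1) * W)) by nra. apply sqrt_le_1_alt.
    assert (r * r <= 4 * (W * W)) by nra.
    assert ((K + 1) * (r * r) <= (K + 1) * (4 * (W * W))) by (apply Rmult_le_compat_l; lra).
    assert (0 <= K * (K + 1) * (4 * (W * W))) by (repeat apply Rmult_le_pos; nra).
    nra. }
  split.
  - assert (0 <= (2 * K + 4) * (D - W)) by (apply Rmult_le_pos; lra).
    assert (0 <= (2000000 * (1 + K) - (2 * K + 4)) * D) by (apply Rmult_le_pos; lra).
    lra.
  - assert (D <= hor + 16 * (18 * W)).
    { apply embed_dist_le_blocks. intros b Hb.
      pose proof (hypot_mul_snow_le fst F' x y b fst_lip eq_refl).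
      pose proof (hypot_mul_snow_le snd F' x y b snd_lip eq_refl).
      pose proof (hypot_mul_snow_le fst F' x' y' b fst_lip eq_refl).
      pose proof (hypot_mul_snow_le snd F' x' y' b snd_lip eq_refl).
      pose proof (Rabs_sub_le (r * snow fst b (twisted_dir F' x y))
                              (r' * snow fst b (twisted_dir F' x' y'))).
      pose proof (Rabs_sub_le (r * snow snd b (twisted_dir F' x y))
                              (r' * snow snd b (twisted_dir F' x' y'))).
      lra. }
    assert (0 <= (2000000 * (1 + K) - 289) * (hor + sqrt (Rabs T))) by (apply Rmult_le_pos; lra).
    lra.
Qed.

Lemma near_vertical_compare : r < 2 * r' ->
  Rabs T <= r' * r' * c + 500 * (1 + K) ^ 2 * (W * W) /\
  r' * r' * c <= 2 * Rabs T + 500 * (1 + K) ^ 2 * (W * W).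
Proof.
  intros Hnear. pose proof (hypot_ge0 x' y').
  assert (Hr' : 0 < r') by lra. assert (Hr : 0 < r) by lra.
  pose proof (hypot_sq x y) as Er. pose proof (hypot_sq x' y') as Er'.
  set (e := (x / r, y / r)). set (e' := (x' / r', y' / r')).
  assert (He : sqnorm e = 1) by (unfold sqnorm, e; simpl; field_simplify_eq; lra).
  assert (He' : sqnorm e' = 1) by (unfold sqnorm, e'; simpl; field_simplify_eq; lra).
  assert (HF : Rabs (F r - F r' - F' r * (r - r')) <= K * (r - r') * (r - r'))
    by (apply (F_taylor F F' K F_deriv K_ge0 F'_lip); lra).
  assert (HFp : Rabs (F' r) <= K * r) by (apply (F'_le F' K F'_lip F'_0); lra).
  assert (Hg : Rabs (r * r * (angle F' r - angle F' r') - 2 * F' r * (r - r'))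
               <= 24 * K * (r - r') * (r - r')).
  { pose proof (angle_taylor F' K K_ge0 F'_lip F'_0 r' r Hr' r'_le ltac:(lra)) as Ht.
    replace (r * r * (angle F' r - angle F' r') - 2 * F' r * (r - r'))
      with (r * r * (angle F' r - angle F' r' - angle_rate F' r * (r - r')))
      by (unfold angle_rate; field; lra).
    rewrite Rabs_mult, (Rabs_pos_eq (r * r)) by nra.
    apply Rmult_le_reg_r with (/ (r * r)); [apply Rinv_0_lt_compat; nra|].
    replace (r * r * Rabs (angle F' r - angle F' r' - angle_rate F' r * (r - r')) * / (r * r))
      with (Rabs (angle F' r - angle F' r' - angle_rate F' r * (r - r'))) by (field; lra).
    exact Ht. }
  pose proof (vertical_chord_compare K r r' (F r) (F r') (F' r) (angle F' r) (angle F' r') e e'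
                K_ge0 Hr' r'_le ltac:(lra) He He' HF HFp Hg) as Hv.
  cbv zeta in Hv.
  replace (F r - F r' + / 2 * r * r' * cross e e') with T in Hv
    by (subst z z'; unfold cross, e, e'; simpl; field; lra).
  replace ((r - r') * (r - r') + 2 * r * r' * (1 - dot e e')) with (W * W) in Hv
    by (rewrite hypot_sq; unfold dot, e, e'; simpl; field_simplify_eq; lra).
  exact Hv.
Qed.

Lemma near_chord_le_dist : r < 2 * r' -> r' * sqrt c <= 70 * D.
Proof.
  intros Hnear. pose proof (hypot_ge0 x' y') as Hr'0.
  pose proof (embed_dist_ge_planar F' x y z x' y' z') as HWD.
  pose proof radius_gap_le as Hgap. pose proof (hypot_ge0 (x - x') (y - y')).
  destruct (Req_dec c 0) as [Hc|Hc]; [rewrite Hc, sqrt_0; lra|].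
  assert (Hu : sqnorm (twisted_dir F' x y) = 1) by (apply twisted_dir_unit; lra).
  assert (Hu' : sqnorm (twisted_dir F' x' y') = 1) by (apply twisted_dir_unit; lra).
  pose proof (chord_ge0 (twisted_dir F' x y) (twisted_dir F' x' y') 0).
  destruct (snow_pair_sub_ge _ _ Hu Hu' ltac:(lra)) as [b [Hb Hlow]].
  pose proof (embed_dist_ge_block F' x y z x' y' z' b Hb) as Hblk.
  set (P := snow fst b (twisted_dir F' x y)) in *. set (P' := snow fst b (twisted_dir F' x' y')) in *.
  set (Q := snow snd b (twisted_dir F' x y)) in *. set (Q' := snow snd b (twisted_dir F' x' y')) in *.
  pose proof (snow_bound fst fst_lip eq_refl b _ Hu) as [_ HP].
  pose proof (snow_bound snd snd_lip eq_refl b _ Hu) as [_ HQ]. fold P in HP. fold Q in HQ.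
  pose proof (hypot_triang (r * P - r' * P') (r * Q - r' * Q') (- ((r - r') * P)) (- ((r - r') * Q)))
    as Htri.
  replace (r * P - r' * P' + - ((r - r') * P)) with (r' * (P - P')) in Htri by ring.
  replace (r * Q - r' * Q' + - ((r - r') * Q)) with (r' * (Q - Q')) in Htri by ring.
  rewrite hypot_scal in Htri by lra.
  pose proof (hypot_le_Rabs_add (- ((r - r') * P)) (- ((r - r') * Q))) as Herr.
  rewrite !Rabs_Ropp, !Rabs_mult, !(Rabs_pos_eq (r - r')) in Herr by lra.
  assert ((r - r') * Rabs P <= W * 3) by (apply Rmult_le_compat; try lra; apply Rabs_pos).
  assert ((r - r') * Rabs Q <= W * 3) by (apply Rmult_le_compat; try lra; apply Rabs_pos).
  assert (r' * (sqrt c / 10) <= r' * hypot (P - P') (Q - Q')) by (apply Rmult_le_compat_l; lra).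
  lra.
Qed.

Lemma near_block_le b : r < 2 * r' -> (b < 16)%nat ->
  Rabs (r * snow fst b (twisted_dir F' x y) - r' * snow fst b (twisted_dir F' x' y'))
  + Rabs (r * snow snd b (twisted_dir F' x y) - r' * snow snd b (twisted_dir F' x' y'))
    <= 4200 * (r' * sqrt c) + 6 * W.
Proof.
  intros Hnear Hb. pose proof (hypot_ge0 x' y') as Hr'0.
  pose proof radius_gap_le as Hgap. pose proof (hypot_ge0 (x - x') (y - y')).
  assert (Hu : sqnorm (twisted_dir F' x y) = 1) by (apply twisted_dir_unit; lra).
  assert (Hu' : sqnorm (twisted_dir F' x' y') = 1) by (apply twisted_dir_unit; lra).
  assert (Hsplit : forall sel, (forall u v, Rabs (sel u - sel v) <= sqrt (sqdist u v)) ->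
            sel (0, 0) = 0 ->
            Rabs (r * snow sel b (twisted_dir F' x y) - r' * snow sel b (twisted_dir F' x' y'))
              <= 2100 * (r' * sqrt c) + 3 * W).
  { intros sel Hlip H0.
    pose proof (snow_sub_le sel Hlip H0 _ _ b Hu Hu' Hb) as Hdiff.
    pose proof (snow_bound sel Hlip H0 b _ Hu) as [_ Hbd].
    replace (r * snow sel b (twisted_dir F' x y) - r' * snow sel b (twisted_dir F' x' y'))
      with (r' * (snow sel b (twisted_dir F' x y) - snow sel b (twisted_dir F' x' y'))
            + (r - r') * snow sel b (twisted_dir F' x y)) by ring.
    eapply Rle_trans; [apply Rabs_triang|].
    rewrite !Rabs_mult, (Rabs_pos_eq r'), (Rabs_pos_eq (r - r')) by lra.
    assert (r' * Rabs (snow sel b (twisted_dir F' x y) - snow sel b (twisted_dir F' x' y'))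
            <= r' * (2100 * sqrt c)) by (apply Rmult_le_compat_l; lra).
    assert ((r - r') * Rabs (snow sel b (twisted_dir F' x y)) <= W * 3)
      by (apply Rmult_le_compat; try lra; apply Rabs_pos).
    lra. }
  pose proof (Hsplit fst fst_lip eq_refl). pose proof (Hsplit snd snd_lip eq_refl). lra.
Qed.

Lemma pair_near : r < 2 * r' ->
  hor + sqrt (Rabs T) <= bilip_const * D /\ D <= bilip_const * (hor + sqrt (Rabs T)).
Proof.
  intros Hnear. pose proof (hypot_ge0 (x - x') (y - y')) as HW0.
  pose proof (hypot_le_Rabs_add (x - x') (y - y')) as HWhor.
  pose proof (Rabs_add_le_2hypot (x - x') (y - y')) as HhorW.
  pose proof (embed_dist_ge_planar F' x y z x' y' z') as HWD.
  pose proof (sqrt_pos (Rabs T)) as HsT. pose proof (Rabs_pos T) as HT0.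
  pose proof (hypot_ge0 x' y') as Hr'0. pose proof (sqrt_pos c) as Hc0.
  pose proof (chord_ge0 (twisted_dir F' x y) (twisted_dir F' x' y') 0) as Hc.
  destruct near_vertical_compare as [HTc HcT]; [exact Hnear|].
  assert (Hrc : sqrt (r' * r' * c) = r' * sqrt c)
    by (rewrite sqrt_mult_alt, sqrt_square by nra; reflexivity).
  assert (HTup : sqrt (Rabs T) <= r' * sqrt c + 23 * (1 + K) * W).
  { rewrite <- Hrc. eapply Rle_trans; [apply sqrt_le_1_alt, HTc|].
    apply sqrt_add_500_le; nra. }
  assert (HTlo : r' * sqrt c <= 2 * sqrt (Rabs T) + 23 * (1 + K) * W).
  { rewrite <- Hrc. eapply Rle_trans; [apply sqrt_le_1_alt, HcT|].
    eapply Rle_trans; [apply sqrt_add_500_le; lra|].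
    rewrite sqrt_mult_alt by lra.
    assert (sqrt 2 <= 2) by (rewrite <- (sqrt_square 2) at 2 by lra; apply sqrt_le_1_alt; lra).
    pose proof (sqrt_pos 2). nra. }
  unfold bilip_const. split.
  - pose proof (near_chord_le_dist Hnear).
    assert (0 <= K * (D - W)) by (apply Rmult_le_pos; lra).
    assert (0 <= K * D) by (apply Rmult_le_pos; lra). lra.
  - assert (D <= hor + 16 * (4200 * (r' * sqrt c) + 6 * W)).
    { apply embed_dist_le_blocks. intros b Hb. apply near_block_le; assumption. }
    assert (0 <= K * (hor - W)) by (apply Rmult_le_pos; lra).
    assert (0 <= K * W) by (apply Rmult_le_pos; lra).
    assert (0 <= K * sqrt (Rabs T)) by (apply Rmult_le_pos; lra).
    lra.
Qed.

Lemma pair_bilip :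
  dH (x, y, z) (x', y', z') <= bilip_const * D /\ D <= bilip_const * dH (x, y, z) (x', y', z').
Proof.
  change (dH (x, y, z) (x', y', z')) with (hor + sqrt (Rabs T)).
  destruct (Rle_lt_dec (2 * r') r); [apply pair_far | apply pair_near]; assumption.
Qed.

End Pair.

Lemma embed_bilip F F' K p q :
  (forall t, 0 <= t -> has_deriv_nonneg F t (F' t)) -> 0 <= K ->
  (forall s t, 0 <= s -> 0 <= t -> Rabs (F' s - F' t) <= K * Rabs (s - t)) -> F' 0 = 0 ->
  Sigma F p -> Sigma F q ->
  / bilip_const K * dH p q <= euclid_dist 34 (embed F' p) (embed F' q) /\
  euclid_dist 34 (embed F' p) (embed F' q) <= bilip_const K * dH p q.
Proof.
  intros F_deriv K_ge0 F'_lip F'_0 Hp Hq.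
  destruct p as [[x y] z], q as [[x' y'] z']. simpl in Hp, Hq.
  assert (HL : 0 < bilip_const K) by (unfold bilip_const; lra).
  set (d := dH (x, y, z) (x', y', z')).
  set (D := euclid_dist 34 (embed F' (x, y, z)) (embed F' (x', y', z'))).
  enough (d <= bilip_const K * D /\ D <= bilip_const K * d) as [H1 H2].
  { split; [|exact H2]. apply Rmult_le_reg_l with (bilip_const K); [exact HL|].
    rewrite <- Rmult_assoc, Rinv_r, Rmult_1_l by lra. exact H1. }
  destruct (Rle_dec (hypot x' y') (hypot x y)) as [Hle|Hgt].
  - exact (pair_bilip F F' K F_deriv K_ge0 F'_lip F'_0 x y z x' y' z' Hp Hq Hle).
  - unfold d, D. rewrite (euclid_dist_comm _ (embed F' (x, y, z))), (dH_comm (x, y, z)).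
    destruct (pair_bilip F F' K F_deriv K_ge0 F'_lip F'_0 x' y' z' x y z Hq Hp ltac:(lra)).
    split; assumption.
Qed.

Theorem corollary5p2 (F F' : R -> R) :
  C11_nonneg F F' -> F' 0 = 0 ->
  forall A : point -> Prop,
    (forall p, A p -> Sigma F p) -> dH_compact A ->
    exists n : nat, biLip_embeds A n.
Proof.
  intros [F_deriv [K [K_ge0 F'_lip]]] F'_0 A HA _.
  exists 34%nat, (bilip_const K), (embed F').
  split; [unfold bilip_const; lra|].
  intros p q Hp Hq. apply (embed_bilip F F' K); auto.
Qed.
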